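(* Let $X$ be a topological space and $p \in X$. If $X$ is productively countably tight at $p$, then $\mathsf{S}_1(\Omega_p, \Omega_p)$ holds, i.e., $X$ has countable strong fan tightness at $p$: for every sequence $(A_n)_{n \in \omega}$ of elements of $\Omega_p$ one can select $a_n \in A_n$ such that $\{a_n : n \in \omega\} \in \Omega_p$.
   Context: For a point $p$ of a space $X$, $\Omega_p$ denotes the collection of all sets $A \subset X$ such that $p \notin A$ and $p \in \overline{A}$. A space $Y$ has countable tightness at $y \in Y$ if whenever $y \in \overline{A}$ there is a countable $B \subset A$ with $y \in \overline{B}$. $X$ is productively countably tight at $p$ if for every space $Y$ and every $y \in Y$ such that $Y$ has countable tightness at $y$, the product $X \times Y$ has countable tightness at $\langle p, y\rangle$. *)

From HB Require Import structures.
From mathcomp Require Import all_boot all_order.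
From mathcomp Require Import all_classical.
From mathcomp Require Import topology.
Set Implicit Arguments. Unset Strict Implicit. Unset Printing Implicit Defensive.
Local Open Scope classical_set_scope.

Definition Omega_at (X : topologicalType) (p : X) : set (set X) :=
  [set A | ~ A p /\ closure A p].

Definition countably_tight_at (Y : topologicalType) (y : Y) : Prop :=
  forall A : set Y, closure A y ->
    exists B : set Y, [/\ B `<=` A, countable B & closure B y].

Definition productively_countably_tight_at (X : topologicalType) (p : X) : Prop :=
  forall (Y : topologicalType) (y : Y),
    countably_tight_at y -> countably_tight_at ((p, y) : (X * Y)%type).

Definition S1_Omega (X : topologicalType) (p : X) : Prop :=
  forall A : nat -> set X, (forall n, Omega_at p (A n)) ->
    exists a : nat -> X, (forall n, A n (a n)) /\ Omega_at p (range a).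

From mathcomp Require Import all_boot all_classical topology.
From HB Require Import structures.
Set Implicit Arguments. Unset Strict Implicit. Unset Printing Implicit Defensive.
Local Open Scope classical_set_scope.

(* Productive tightness is tested against the fan: the space with an apex and
   points (s, k) for s : nat -> nat and k : nat, in which a neighbourhood of
   the apex contains a tail k >= h s of every spine s.  The fan is countably
   tight at its apex, so X is countably tight at p and each A n may be replaced
   by a sequence e n with p in its closure.  Place above (s, k) the point
   e n (s n), where n codes the prefix of length k of s.  Then (p, apex) lies in
   the closure of this graph, hence of a countable part of it, which involves
   only countably many spines s_i.  A single selection tau agreeing eventually
   with each s_i along the codes of its prefixes gives a n = e n (tau n): a
   neighbourhood of p meets the graph at arbitrarily high points of some s_i,
   and there the graph points are terms of the sequence a. *)

Lemma nbhs_setX (X Y : topologicalType) (x : X) (y : Y) U W :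
  nbhs x U -> nbhs y W -> nbhs (x, y) (U `*` W).
Proof. by move=> nU nW; exists (U, W). Qed.

Lemma closure_fst_image (X Y : topologicalType) (A : set (X * Y)) (x : X) (y : Y) :
  closure A (x, y) -> closure (fst @` A) x.
Proof.
move=> clA U nU; have [z [Az [Uz _]]] := clA _ (nbhs_setX nU filterT).
by exists z.1; split => //; exists z.
Qed.

Lemma closure_section (X Y : topologicalType) (A : set (X * Y)) (x : X) (y : Y) U :
  closure A (x, y) -> nbhs x U -> closure [set b | exists2 a, U a & A (a, b)] y.
Proof.
move=> clA nU W nW; have [[a b] [Aab [Ua Wb]]] := clA _ (nbhs_setX nU nW).
by exists b; split => //; exists a.
Qed.

Lemma countable_range (T : Type) (C : set T) :
  countable C -> C !=set0 -> exists f : nat -> T, range f = C.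
Proof. by move=> /pfcard_geP [->|/surjfunPex [f fC]] [x Cx] //; exists f. Qed.

Definition fan := option ((nat -> nat) * nat).
HB.instance Definition _ := gen_eqMixin fan.
HB.instance Definition _ := gen_choiceMixin fan.

Definition fan_tail (h : (nat -> nat) -> nat) : set fan :=
  fun y => if y is Some (s, k) then (h s <= k)%N else True.

Definition fan_open (V : set fan) : Prop :=
  V None -> exists h, fan_tail h `<=` V.

Lemma fan_openT : fan_open setT.
Proof. by move=> _; exists (fun=> 0%N). Qed.

Lemma fan_openI : setI_closed fan_open.
Proof.
move=> A B oA oB [/oA [hA sA] /oB [hB sB]].
exists (fun s => maxn (hA s) (hB s)) => -[[s k] /=|_]; last by split; [apply: sA|apply: sB].
by rewrite geq_max => /andP [hAk hBk]; split; [apply: sA|apply: sB].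
Qed.

Lemma fan_open_bigU (I : Type) (f : I -> set fan) :
  (forall i, fan_open (f i)) -> fan_open (\bigcup_i f i).
Proof.
move=> open_f [i _ fi]; have [h sh] := open_f i fi.
by exists h => y /sh; exists i.
Qed.

HB.instance Definition _ := isOpenTopological.Build fan fan_openT fan_openI fan_open_bigU.

Lemma nbhs_fanP (W : set fan) :
  nbhs (None : fan) W <-> exists h, fan_tail h `<=` W.
Proof.
split=> [[B [oB BN sBW]]|[h sW]].
  by have [h sh] := oB BN; exists h => y /sh /sBW.
by exists (fan_tail h); split => // _; exists h.
Qed.

Lemma fan_closure_spine (A : set fan) : closure A None -> ~ A None ->
  exists s, forall m, exists2 k, (m <= k)%N & A (Some (s, k)).
Proof.
move=> clA nAN; apply/not_existsP => noSpine.
have /choice [h hP] : forall s, exists m, forall k, (m <= k)%N -> ~ A (Some (s, k)).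
  by move=> s; have /existsNP [m mP] := noSpine s; exists m => k mk Ak; apply: mP; exists k.
have [[[s k]|] [Ay tail_y]] := clA _ (proj2 (nbhs_fanP _) (ex_intro _ h (@subset_refl _ _))).
  exact: hP _ _ tail_y Ay.
exact: nAN.
Qed.

Lemma fan_countably_tight : countably_tight_at (None : fan).
Proof.
move=> A clA; have [AN|nAN] := pselect (A None).
  exists [set None]; split; [by move=> y ->|exact: countable1|].
  exact: subset_closure.
have [s sP] := fan_closure_spine clA nAN.
exists (A `&` range (fun k => Some (s, k))); split; first exact: subIsetl.
  apply: (@sub_countable _ _ _ (range (fun k => Some (s, k) : fan))).
    by apply: subset_card_le; exact: subIsetr.
  exact: card_le_trans (card_image_le _ _) (countableP _).
move=> W /nbhs_fanP [h sW]; have [k hk Ak] := sP (h s).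
by exists (Some (s, k)); split; [split => //; exists k | exact: sW].
Qed.

Lemma productively_countably_tight_countably_tight (X : topologicalType) (p : X) :
  productively_countably_tight_at p -> countably_tight_at p.
Proof.
move=> pct A clA.
have clAX : closure (A `*` [set (None : fan)]) (p, None).
  move=> B [[U W] /= [nU nW] sB]; have [x [Ax Ux]] := clA U nU.
  by exists (x, None); split => //; apply: sB; split => //=; exact: nbhs_singleton nW.
have [D [sDA cD clD]] := pct fan None fan_countably_tight _ clAX.
exists (fst @` D); split.
- by move=> x [z /sDA [Az _] <-].
- exact: card_le_trans (card_image_le _ _) cD.
- exact: closure_fst_image clD.
Qed.

Lemma countably_tight_range (X : topologicalType) (p : X) (A : set X) :
  countably_tight_at p -> closure A p ->
  exists e : nat -> X, range e `<=` A /\ closure (range e) p.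
Proof.
move=> tight /tight [C [sCA cC clC]].
have [x [Cx _]] := clC _ filterT.
have [e eC] := countable_range cC (ex_intro _ x Cx).
by exists e; rewrite eC.
Qed.

Definition prefix_code (s : nat -> nat) (k : nat) : nat := pickle (mkseq s k).

Lemma prefix_code_inj s s' k k' : prefix_code s k = prefix_code s' k' ->
  k = k' /\ forall j, (j < k)%N -> s j = s' j.
Proof.
move=> /(pcan_inj (@pickleK_inv _)) E.
have kk' : k = k' by rewrite -(size_mkseq s k) E size_mkseq.
by split => // j jk; subst k'; rewrite -(nth_mkseq 0 s jk) E nth_mkseq.
Qed.

Lemma prefix_code_eventually_neq s s' : s' <> s ->
  exists m, forall k k', (m <= k)%N -> prefix_code s' k' <> prefix_code s k.
Proof.
move=> neq_s's; have [j neq_j] : exists j, s' j <> s j.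
  by apply/existsNP => eq_s; apply: neq_s's; apply: funext.
exists j.+1 => k k' jk /prefix_code_inj [k'k eq_s].
by apply: neq_j; apply: eq_s; rewrite k'k.
Qed.

Lemma prefix_code_eventually_avoid (F : nat -> nat -> nat) s n :
  exists m, forall i, (i < n)%N -> F i <> s ->
    forall k k', (m <= k)%N -> prefix_code (F i) k' <> prefix_code s k.
Proof.
elim: n => [|n [m mP]]; first by exists 0%N.
have [eq_Fn|neq_Fn] := pselect (F n = s).
  exists m => i; rewrite ltnS leq_eqVlt => /orP [/eqP -> //|]; exact: mP.
have [m' m'P] := prefix_code_eventually_neq neq_Fn.
exists (maxn m m') => i; rewrite ltnS leq_eqVlt => /orP [/eqP -> _|/mP iP /iP iP'] k k';
  rewrite geq_max => /andP [mk m'k]; [exact: m'P | exact: iP'].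
Qed.

(* tau n follows the first F i having n as the code of one of its prefixes; two
   distinct F i have disjoint codes beyond the point where they differ. *)
Lemma diagonal_selector (F : nat -> nat -> nat) : exists tau : nat -> nat,
  forall i, exists m, forall k, (m <= k)%N ->
    tau (prefix_code (F i) k) = F i (prefix_code (F i) k).
Proof.
pose coded n : pred nat := fun i => `[< exists k, prefix_code (F i) k = n >].
pose tau n := if pselect (exists i, coded n i) is left ex then F (ex_minn ex) n else 0%N.
exists tau => i; have [m mP] := prefix_code_eventually_avoid F (F i) i.
exists m => k mk; rewrite /tau; case: pselect => [ex|[]]; last first.
  by exists i; apply/asboolP; exists k.
case: ex_minnP => i0 /asboolP [k' codeE] min_i0.
have i0i : (i0 <= i)%N by apply: min_i0; apply/asboolP; exists k.
have [-> //|neq_F] := pselect (F i0 = F i).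
move: i0i; rewrite leq_eqVlt => /orP [/eqP eq_i0|i0i]; first by rewrite eq_i0 in neq_F.
by case: (mP i0 i0i neq_F k k' mk).
Qed.

Section FanGraph.
Variables (X : topologicalType) (e : nat -> nat -> X).

Definition fan_graph_point (s : nat -> nat) (k : nat) : X :=
  e (prefix_code s k) (s (prefix_code s k)).

Definition fan_graph : set (X * fan) :=
  [set z | exists s k, z = (fan_graph_point s k, Some (s, k))].

Lemma fan_graph_None x : ~ fan_graph (x, None).
Proof. by move=> [s [k []]]. Qed.

Lemma fan_graph_Some x s k : fan_graph (x, Some (s, k)) -> x = fan_graph_point s k.
Proof. by move=> [s' [k' [-> -> ->]]]. Qed.

Variable p : X.
Hypothesis closure_e : forall n, closure (range (e n)) p.

Lemma closure_fan_graph : closure fan_graph (p, None).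
Proof.
move=> B [[U W] /= [nU /nbhs_fanP [h sW]] sB].
have /choice [s sU] : forall n, exists j, U (e n j).
  by move=> n; have [_ [[j _ <-] Ux]] := closure_e n nU; exists j.
exists (fan_graph_point s (h s), Some (s, h s)); split; first by exists s, (h s).
by apply: sB; split => /=; [exact: sU | apply: sW => /=].
Qed.

Lemma fan_graph_selection (D : set (X * fan)) :
  D `<=` fan_graph -> countable D -> closure D (p, None) ->
  exists tau : nat -> nat, closure (range (fun n => e n (tau n))) p.
Proof.
move=> sDG cD clD.
pose spine (z : X * fan) := if z.2 is Some (s, _) then s else fun=> 0%N.
have [F FE] : exists F : nat -> nat -> nat, range F = spine @` D.
  apply: countable_range; first exact: card_le_trans (card_image_le _ _) cD.
  by have [z [Dz _]] := clD _ filterT; exists (spine z), z.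
have [tau tauP] := diagonal_selector F.
exists tau => U nU.
have [s sP] : exists s, forall m, exists2 k, (m <= k)%N &
    [set b | exists2 x, U x & D (x, b)] (Some (s, k)).
  apply: fan_closure_spine; first exact: closure_section clD nU.
  by move=> [x _ /sDG /fan_graph_None].
have [k0 _ [x0 _ Dx0]] := sP 0%N.
have [i _ Fis] : range F s by rewrite FE; exists (x0, Some (s, k0)).
have [m mP] := tauP i.
have [k mk [x Ux /sDG /fan_graph_Some xE]] := sP m.
exists x; split; last exact: Ux.
exists (prefix_code s k); first by [].
by rewrite xE /fan_graph_point -Fis (mP k mk).
Qed.

End FanGraph.

Theorem theorem2p7 (X : topologicalType) (p : X) :
  productively_countably_tight_at p -> S1_Omega p.
Proof.
move=> pct A AP.
have tight := productively_countably_tight_countably_tight pct.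
have /choice [e eP] : forall n, exists e : nat -> X,
    range e `<=` A n /\ closure (range e) p.
  by move=> n; exact: countably_tight_range tight (AP n).2.
have [D [sDG cD clD]] :=
  pct fan None fan_countably_tight _ (closure_fan_graph (fun n => (eP n).2)).
have [tau closure_tau] := fan_graph_selection sDG cD clD.
have e_A n : A n (e n (tau n)) by apply: (eP n).1; exists (tau n).
exists (fun n => e n (tau n)); split => //; split => // -[n _ pE].
by apply: (AP n).1; rewrite -pE.
Qed.
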